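(* The intersection of an $\ell_1$-convex set and an interval in $\mathbb{R}^n$ is $\ell_1$-convex.
   Context: A subset $Z\subseteq\mathbb{R}^n$ is $\ell_1$-convex if for all $z,z'\in Z$, with $D=\sum_i|z_i-z'_i|$, there is $\gamma\colon[0,D]\to Z$ with $\gamma(0)=z,\gamma(D)=z'$ and $\sum_i|\gamma_i(t)-\gamma_i(t')|=|t-t'|$ for all $t,t'$. An interval in $\mathbb{R}^n$ is a set $\prod_{i=1}^n I_i$ with each $I_i\subseteq\mathbb{R}$ a (possibly empty, possibly unbounded) interval. *)

From HB Require Import structures.
From mathcomp Require Import all_boot all_order all_algebra.
From mathcomp Require Import interval.
From mathcomp Require Import Rstruct.
From Stdlib Require Import Reals.
Set Implicit Arguments. Unset Strict Implicit. Unset Printing Implicit Defensive.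
Import Order.TTheory GRing.Theory Num.Theory.
Local Open Scope ring_scope.

Definition l1dist (n : nat) (x y : 'I_n -> R) : R := \sum_(i < n) `|x i - y i|.

Definition l1_convex (n : nat) (Z : ('I_n -> R) -> Prop) : Prop :=
  forall z z' : 'I_n -> R, Z z -> Z z' ->
    let D := l1dist z z' in
    exists gamma : R -> ('I_n -> R),
      gamma 0 = z /\ gamma D = z' /\
      (forall t, 0 <= t <= D -> Z (gamma t)) /\
      (forall t t', 0 <= t <= D -> 0 <= t' <= D ->
          l1dist (gamma t) (gamma t') = `|t - t'|).

(* An interval in R^n: a product of (possibly empty, possibly unbounded)
   real intervals, given by MathComp's [interval R] type. *)
Definition box (n : nat) (I : 'I_n -> interval R) : ('I_n -> R) -> Prop :=
  fun x => forall i, x i \in I i.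

(* A geodesic point y between z and z' satisfies d(z,y) + d(y,z') = d(z,z');
   since each coordinate term obeys the triangle inequality, equality holds in
   every coordinate, so each y_i lies between z_i and z'_i.  Intervals of R are
   order-convex, hence y stays in every box containing z and z'. *)
From mathcomp Require Import all_boot all_order all_algebra interval Rstruct.
From Stdlib Require Import Reals.
From mathcomp Require Import lra.
Import Order.TTheory GRing.Theory Num.Theory.
Set Implicit Arguments. Unset Strict Implicit. Unset Printing Implicit Defensive.
Local Open Scope ring_scope.

Lemma mem_itv_between (T : realDomainType) (i : interval T) (a b x : T) :
  a \in i -> b \in i -> a <= x <= b -> x \in i.
Proof.
case: i => bl br; rewrite !itv_boundlr => /andP[la ra] /andP[lb rb] /andP[ax xb].
apply/andP; split.
  by apply: le_trans la _; rewrite leBSide /= ax.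
by apply: le_trans rb; rewrite leBSide /= xb.
Qed.

Lemma distr_eq_between (T : realDomainType) (a b x : T) :
  `|a - x| + `|x - b| = `|a - b| -> (a <= x <= b) || (b <= x <= a).
Proof.
move=> Habx.
have h1 := ler_norm (a - x); have h2 := ler_norm (x - b).
have h3 : - (a - x) <= `|a - x| by rewrite -normrN ler_norm.
have h4 : - (x - b) <= `|x - b| by rewrite -normrN ler_norm.
have [ab|ba] := leP a b.
  have E : `|a - b| = b - a by rewrite distrC ger0_norm // subr_ge0.
  by apply/orP; left; apply/andP; split; lra.
have E : `|a - b| = a - b by rewrite ger0_norm // subr_ge0 ltW.
by apply/orP; right; apply/andP; split; lra.
Qed.

Lemma l1dist_ge0 (n : nat) (x y : 'I_n -> R) : 0 <= l1dist x y.
Proof. by apply: sumr_ge0 => i _. Qed.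

Lemma l1dist_triangle_eq_coord (n : nat) (x y z : 'I_n -> R) :
  l1dist x y + l1dist y z = l1dist x z ->
  forall i, `|x i - y i| + `|y i - z i| = `|x i - z i|.
Proof.
move=> Hxyz i; apply/eqP; rewrite -subr_eq0; apply/eqP.
pose F j := `|x j - y j| + `|y j - z j| - `|x j - z j|.
have F_ge0 j : xpredT j -> 0 <= F j.
  by move=> _; rewrite subr_ge0 (le_trans _ (ler_normD _ _)) // addrA subrK.
have sumF : \sum_(j < n) F j = 0.
  by rewrite sumrB big_split /=; move: Hxyz; rewrite /l1dist => ->; rewrite subrr.
exact: (psumr_eq0P F_ge0 sumF).
Qed.

Lemma box_between (n : nat) (I : 'I_n -> interval R) (x y z : 'I_n -> R) :
  box I x -> box I z -> l1dist x y + l1dist y z = l1dist x z -> box I y.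
Proof.
move=> Bx Bz Hxyz i.
have /orP[Hi|Hi] := distr_eq_between (l1dist_triangle_eq_coord Hxyz i).
- exact: mem_itv_between (Bx i) (Bz i) Hi.
- exact: mem_itv_between (Bz i) (Bx i) Hi.
Qed.

Lemma geodesic_triangle_eq (n : nat) (z z' : 'I_n -> R) (g : R -> 'I_n -> R) (t : R) :
  let D := l1dist z z' in
  g 0 = z -> g D = z' ->
  (forall t t', 0 <= t <= D -> 0 <= t' <= D -> l1dist (g t) (g t') = `|t - t'|) ->
  0 <= t <= D -> l1dist z (g t) + l1dist (g t) z' = D.
Proof.
move=> D g0 gD gd tI; have /andP[t0 tD] := tI.
have D0 : 0 <= D := l1dist_ge0 z z'.
have DI : 0 <= D <= D by rewrite D0 lexx.
have zI : 0 <= (0 : R) <= D by rewrite lexx D0.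
rewrite -{1}g0 -gD !gd // sub0r normrN (ger0_norm t0) distrC.
rewrite (ger0_norm (_ : 0 <= D - t)) ?subr_ge0 //.
by rewrite addrC subrK.
Qed.

Theorem corollary1p9 (n : nat) (Z : ('I_n -> R) -> Prop) (I : 'I_n -> interval R) :
  l1_convex Z -> l1_convex (fun x => Z x /\ box I x).
Proof.
move=> HZ z z' [Zz Bz] [Zz' Bz'] /=.
have [g [g0 [gD [gZ gd]]]] := HZ z z' Zz Zz'.
exists g; do 3!split => //.
move=> t Ht; split; first exact: gZ.
exact: box_between Bz Bz' (geodesic_triangle_eq g0 gD gd Ht).
Qed.
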